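(* Let $p$ be a prime and $m\ge 0$ an integer. Let $C_m=\{a\in\mathbb{Z}_p:\delta^m a=0\}$; the reduction map $C_m\to\mathbb{Z}_p/p^m\mathbb{Z}_p$ is a bijection, so for each $\alpha\in I=\{0,1,\dots,p^m-1\}$ there is a unique $a_\alpha\in C_m$ with $a_\alpha\equiv\alpha \pmod{p^m}$. Let $I'=\{\beta=(\beta_0,\dots,\beta_{m-1})\in\mathbb{Z}^m:0\le\beta_0,\dots,\beta_{m-1}\le p-1\}$ (a set with $p^m$ elements), fix any ordering of $I'$, and let $W=(w_{\alpha\beta})_{\alpha\in I,\beta\in I'}$ be the square matrix with entries $w_{\alpha\beta}=(a_\alpha)^{\beta_0}(\delta a_\alpha)^{\beta_1}\cdots(\delta^{m-1}a_\alpha)^{\beta_{m-1}}\in\mathbb{Z}_p$, with the convention $b^0=1$ for all $b\in\mathbb{Z}_p$. Then $\det W$ is a unit in $\mathbb{Z}_p$.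
   Context: $\mathbb{Z}_p$ is the ring of $p$-adic integers, $\delta:\mathbb{Z}_p\to\mathbb{Z}_p$ is the Fermat quotient operator $\delta a=(a-a^p)/p$, and $\delta^i$ is its $i$-th iterate. (Changing the ordering of $I'$ only changes $\det W$ by a sign.) *)

From HB Require Import structures.
From mathcomp Require Import all_boot all_order all_algebra.
From mathcomp Require Import boolp.
Set Implicit Arguments.
Unset Strict Implicit.
Unset Printing Implicit Defensive.
Import Order.TTheory GRing.Theory Num.Theory.
Local Open Scope ring_scope.

(* The ring Z_p of p-adic integers, built as the inverse limit                 *)
(*   Z_p = lim_n Z / p^(n+1) Z                                                *)
(* To keep every 'Z_(_) a genuine ring for every nat parameter p, the modulus  *)
(* at level n is (maxn p 2)^(n+1); for every prime p this is p^(n+1).          *)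

Definition padic_base (p : nat) : nat := maxn p 2.
Definition padic_mod (p n : nat) : nat := (padic_base p ^ n.+1)%N.

Lemma padic_base_gt1 p : (1 < padic_base p)%N.
Proof. by rewrite /padic_base leq_max ltnSn orbT. Qed.

Lemma padic_mod_gt1 p n : (1 < padic_mod p n)%N.
Proof.
rewrite /padic_mod; have h := padic_base_gt1 p.
by rewrite (leq_trans h) // -{1}(expn1 (padic_base p)) leq_pexp2l // ltnW.
Qed.

Lemma padic_mod_cast p n : (Zp_trunc (padic_mod p n)).+2 = padic_mod p n.
Proof. exact: Zp_cast (padic_mod_gt1 p n). Qed.

Lemma padic_mod_dvd p n : (padic_mod p n %| padic_mod p n.+1)%N.
Proof. by rewrite /padic_mod dvdn_exp2l. Qed.

Section ProductRing.
Variable p : nat.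

Definition ZpProd := forall n : nat, 'Z_(padic_mod p n).

HB.instance Definition _ := Choice.on ZpProd.

Definition zprod0 : ZpProd := fun n => 0.
Definition zprod1 : ZpProd := fun n => 1.
Definition zprodN (x : ZpProd) : ZpProd := fun n => - x n.
Definition zprodD (x y : ZpProd) : ZpProd := fun n => x n + y n.
Definition zprodM (x y : ZpProd) : ZpProd := fun n => x n * y n.

Let fe := @functional_extensionality_dep.

Lemma zprodDA : associative zprodD.
Proof. by move=> x y z; apply: fe => n; rewrite /zprodD addrA. Qed.
Lemma zprodDC : commutative zprodD.
Proof. by move=> x y; apply: fe => n; rewrite /zprodD addrC. Qed.
Lemma zprod0D : left_id zprod0 zprodD.
Proof. by move=> x; apply: fe => n; rewrite /zprodD add0r. Qed.
Lemma zprodND : left_inverse zprod0 zprodN zprodD.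
Proof. by move=> x; apply: fe => n; rewrite /zprodD /zprodN addNr. Qed.

HB.instance Definition _ :=
  GRing.isZmodule.Build ZpProd zprodDA zprodDC zprod0D zprodND.

Lemma zprodMA : associative zprodM.
Proof. by move=> x y z; apply: fe => n; rewrite /zprodM mulrA. Qed.
Lemma zprodMC : commutative zprodM.
Proof. by move=> x y; apply: fe => n; rewrite /zprodM mulrC. Qed.
Lemma zprod1M : left_id zprod1 zprodM.
Proof. by move=> x; apply: fe => n; rewrite /zprodM mul1r. Qed.
Lemma zprodMDl : left_distributive zprodM (+%R : ZpProd -> ZpProd -> ZpProd).
Proof. by move=> x y z; apply: fe => n; rewrite /zprodM mulrDl. Qed.
Lemma zprod1_neq0 : zprod1 != (0 : ZpProd).
Proof.
apply/eqP=> /(congr1 (fun f : ZpProd => f 0%N)) /eqP.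
by rewrite /zprod1 oner_eq0.
Qed.

HB.instance Definition _ :=
  GRing.Zmodule_isComNzRing.Build ZpProd zprodMA zprodMC zprod1M zprodMDl
    zprod1_neq0.

Definition padic_red n (y : 'Z_(padic_mod p n.+1)) : 'Z_(padic_mod p n) :=
  (val y)%:R.

Lemma padic_red_mod n c :
  (((c %% (Zp_trunc (padic_mod p n.+1)).+2)%N)%:R : 'Z_(padic_mod p n)) = c%:R.
Proof.
rewrite [X in (_ %% X)%N]padic_mod_cast.
rewrite -[in RHS](Zp_nat_mod (padic_mod_gt1 p n)) -(Zp_nat_mod (padic_mod_gt1 p n)).
by rewrite modn_dvdm // padic_mod_dvd.
Qed.

Lemma padic_val n (y : 'Z_(padic_mod p n)) : y = (val y)%:R.
Proof. by rewrite natr_Zp. Qed.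

Lemma padic_redD n : {morph @padic_red n : x y / x + y}.
Proof.
move=> x y; rewrite /padic_red /= padic_red_mod.
by rewrite natrD.
Qed.

Lemma padic_redM n : {morph @padic_red n : x y / x * y}.
Proof.
move=> x y; rewrite /padic_red /= padic_red_mod.
by rewrite natrM.
Qed.

Lemma padic_redN n : {morph @padic_red n : x / - x}.
Proof.
move=> x; apply/eqP; rewrite -subr_eq0 opprK -padic_redD addNr.
by rewrite /padic_red /=.
Qed.

Definition padic_compat : {pred ZpProd} :=
  [pred x : ZpProd | `[< forall n, x n = padic_red (x n.+1) >] ].

Lemma padic_compat_subring : subring_closed padic_compat.
Proof.
split.
- rewrite inE; apply/asboolP => n /=.
  by rewrite /padic_red /= padic_red_mod.
- move=> x y; rewrite !inE => /asboolP hx /asboolP hy; apply/asboolP => n.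
  by rewrite /= /zprodD /zprodN padic_redD padic_redN -hx -hy.
- move=> x y; rewrite !inE => /asboolP hx /asboolP hy; apply/asboolP => n.
  by rewrite /= /zprodM padic_redM -hx -hy.
Qed.

End ProductRing.

Record padic_int (p : nat) := PadicInt {
  padic_fam : ZpProd p;
  padic_famP : padic_fam \in @padic_compat p }.

HB.instance Definition _ p := [isSub for @padic_fam p].
HB.instance Definition _ p := [Choice of padic_int p by <:].
HB.instance Definition _ p :=
  GRing.isSubringClosed.Build _ (@padic_compat p) (@padic_compat_subring p).
HB.instance Definition _ p := [SubChoice_isSubComNzRing of padic_int p by <:].

(* division by p in Z_p: fermat_quot p a is the (unique, Z_p being torsion   *)
(* free) b with p * b = a - a^p; this b exists by Fermat's little theorem.   *)
(* (The default value 0 is never used when p is prime.)                      *)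
Definition fermat_quot (p : nat) (a : padic_int p) : padic_int p :=
  match pselect (exists b : padic_int p, p%:R * b = a - a ^+ p) with
  | left h => projT1 (cid h)
  | right _ => 0
  end.

(* Reduce W modulo p.  Since a = a^p + p * delta a, and x = y mod p^(i+1)    *)
(* implies x^p = y^p mod p^(i+2), the class of a mod p^m is determined by    *)
(* the residues mod p of a, delta a, ..., delta^(m-1) a.  As the a_alpha are *)
(* pairwise incongruent mod p^m, their residue vectors are p^m distinct      *)
(* points of F_p^m, and W mod p evaluates the monomials of partial degrees   *)
(* < p at these points.  Multiplying it by the matrix of coefficients of the *)
(* indicator functions prod_j (1 - (x_j - u_j)^(p-1)) gives the identity, so *)
(* det W is a unit mod p, hence a unit of Z_p.                                *)

From HB Require Import structures.
From mathcomp Require Import all_boot all_order all_algebra.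
From mathcomp Require Import boolp finfield ring.
Set Implicit Arguments.
Unset Strict Implicit.
Unset Printing Implicit Defensive.
Import Order.TTheory GRing.Theory Num.Theory.
Local Open Scope ring_scope.

Definition monomial_mx (R : pzRingType) (N m q : nat)
    (v : 'I_N -> 'I_m -> R) (e : 'I_N -> {ffun 'I_m -> 'I_q}) : 'M[R]_N :=
  \matrix_(i, b) \prod_(j < m) v i j ^+ e b j.

Lemma map_monomial_mx (R S : pzRingType) (f : {rmorphism R -> S}) N m q
    (v : 'I_N -> 'I_m -> R) (e : 'I_N -> {ffun 'I_m -> 'I_q}) :
  map_mx f (monomial_mx v e) = monomial_mx (fun i j => f (v i j)) e.
Proof.
by apply/matrixP => i b; rewrite !mxE rmorph_prod; under eq_bigr do rewrite rmorphXn.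
Qed.

Section MonomialInterpolation.
Variables (F : finFieldType) (q : nat).
Hypothesis cardF : #|F| = q.

(* The coefficients of [1 - (x - u) ^+ q.-1], the indicator function of [u]. *)
Definition indicator_coef (u : F) (k : nat) : F :=
  (k == 0)%:R - 'C(q.-1, k)%:R * (- u) ^+ (q.-1 - k).

Lemma indicator_coefP (u x : F) :
  \sum_(k < q) x ^+ k * indicator_coef u k = (x == u)%:R.
Proof.
have q_gt1 : (1 < q)%N by rewrite -cardF card_finNzRing_gt1.
have q_gt0 : (0 < q)%N by apply: ltnW.
transitivity (1 - (x - u) ^+ q.-1).
  rewrite /indicator_coef; under eq_bigr do rewrite mulrBr.
  rewrite sumrB; congr (_ - _).
    rewrite (bigD1 (Ordinal q_gt0)) //= expr0 mulr1 big1 ?addr0 // => k k_neq0.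
    suff /negbTE-> : (nat_of_ord k != 0)%N by rewrite mulr0.
    by apply: contra k_neq0 => /eqP k0; apply/eqP/ord_inj.
  rewrite addrC exprDn (prednK q_gt0).
  by apply: eq_bigr => i _; rewrite -[RHS]mulr_natl mulrC mulrA.
have [->|x_neq_u] := eqVneq x u.
  by rewrite subrr expr0n -(subn1 q) subn_eq0 leqNgt q_gt1 subr0.
have xu_neq0 : x - u != 0 by rewrite subr_eq0.
suff -> : (x - u) ^+ q.-1 = 1 by rewrite subrr.
apply: (mulfI xu_neq0); rewrite mulr1 -exprS prednK //.
by rewrite -cardF expf_card.
Qed.

Lemma monomial_mx_unit N m (v : 'I_N -> 'I_m -> F)
    (e : 'I_N -> {ffun 'I_m -> 'I_q}) :
  (forall i i', v i =1 v i' -> i = i') -> bijective e ->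
  monomial_mx v e \in unitmx.
Proof.
move=> v_inj e_bij.
pose C := \matrix_(b, i) \prod_(j < m) indicator_coef (v i j) (e b j).
suff /mulmx1_unit[] : monomial_mx v e *m C = 1%:M by [].
apply/matrixP => i i'; rewrite !mxE.
pose P (f : {ffun 'I_m -> 'I_q}) :=
  \prod_(j < m) (v i j ^+ f j * indicator_coef (v i' j) (f j)).
transitivity (\sum_b P (e b)).
  by apply: eq_bigr => b _; rewrite !mxE -big_split.
have -> : \sum_b P (e b) = \sum_f P f.
  by symmetry; apply: reindex; apply: onW_bij.
rewrite /P -(bigA_distr_bigA (fun j (k : 'I_q) =>
  v i j ^+ k * indicator_coef (v i' j) k)) /=.
under eq_bigr do rewrite indicator_coefP.
have [-> | i_neq_i'] := eqVneq i i'.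
  by rewrite big1 // => j _; rewrite eqxx.
have [j /negbTE vj_neq] : exists j, v i j != v i' j.
  apply/existsP; rewrite -negb_forall; apply: contra i_neq_i' => /forallP vij.
  by apply/eqP/v_inj => j; apply/eqP.
by rewrite (bigD1 j) //= vj_neq mul0r.
Qed.

End MonomialInterpolation.

Definition Zmod_to_Fp (p n : nat) (u : 'Z_(padic_mod p n)) : 'F_p := (u : nat)%:R.

(* [hp] does not occur in the body; it keys the ring morphism instances      *)
(* below, whose proofs need [p] to be prime.                                 *)
Definition padic_residue (p : nat) (hp : prime p) (x : padic_int p) : 'F_p :=
  Zmod_to_Fp (padic_fam x 0).

Section PadicResidue.
Variables (p : nat) (hp : prime p).

Lemma padic_modE n : padic_mod p n = (p ^ n.+1)%N.
Proof. by rewrite /padic_mod /padic_base (maxn_idPl (prime_gt1 hp)). Qed.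

Lemma dvdn_padic_mod n : (p %| padic_mod p n)%N.
Proof. by rewrite padic_modE dvdn_exp. Qed.

Lemma Zmod_to_Fp_nat n k : Zmod_to_Fp (k%:R : 'Z_(padic_mod p n)) = k%:R.
Proof.
rewrite /Zmod_to_Fp val_Zp_nat ?padic_mod_gt1 //.
by rewrite -(Fp_nat_mod hp) (modn_dvdm _ (dvdn_padic_mod n)) Fp_nat_mod.
Qed.

Lemma Zmod_to_FpD n (u v : 'Z_(padic_mod p n)) :
  Zmod_to_Fp (u + v) = Zmod_to_Fp u + Zmod_to_Fp v.
Proof. by rewrite (padic_val u) (padic_val v) -natrD !Zmod_to_Fp_nat natrD. Qed.

Lemma Zmod_to_FpM n (u v : 'Z_(padic_mod p n)) :
  Zmod_to_Fp (u * v) = Zmod_to_Fp u * Zmod_to_Fp v.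
Proof. by rewrite (padic_val u) (padic_val v) -natrM !Zmod_to_Fp_nat natrM. Qed.

Lemma padic_residue_is_zmod_morphism : zmod_morphism (padic_residue hp).
Proof.
move=> x y; rewrite /padic_residue; apply/eqP.
by rewrite eq_sym subr_eq -Zmod_to_FpD subrK.
Qed.

Lemma padic_residue_is_monoid_morphism : monoid_morphism (padic_residue hp).
Proof.
split; first exact: (Zmod_to_Fp_nat 0 1).
by move=> x y; rewrite /padic_residue -Zmod_to_FpM.
Qed.

End PadicResidue.

HB.instance Definition _ p (hp : prime p) := GRing.isZmodMorphism.Build _ _
  (padic_residue hp) (padic_residue_is_zmod_morphism hp).
HB.instance Definition _ p (hp : prime p) := GRing.isMonoidMorphism.Build _ _
  (padic_residue hp) (padic_residue_is_monoid_morphism hp).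

Section PadicDivision.
Variables (p : nat) (hp : prime p).
Local Notation residue := (padic_residue hp).

Lemma padic_modS n : padic_mod p n.+1 = (p * padic_mod p n)%N.
Proof. by rewrite !(padic_modE hp) expnS. Qed.

Lemma padic_fam_nat (k n : nat) : padic_fam (k%:R : padic_int p) n = k%:R.
Proof.
elim: k => [//|k IHk]; rewrite -[in LHS]addn1 natrD.
by rewrite -[LHS]/(padic_fam (k%:R : padic_int p) n + 1) IHk -mulrSr.
Qed.

Lemma val_padic_famS (z : padic_int p) n :
  val (padic_fam z n) = (val (padic_fam z n.+1) %% padic_mod p n)%N.
Proof.
have /asboolP -> := padic_famP z.
by rewrite /padic_red /= val_Zp_nat ?padic_mod_gt1.
Qed.

Lemma padic_fam_modp (z : padic_int p) n :
  (val (padic_fam z n) %% p = val (padic_fam z 0) %% p)%N.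
Proof.
elim: n => [//|n IHn]; rewrite -IHn (val_padic_famS z n).
by rewrite (modn_dvdm _ (dvdn_padic_mod hp n)).
Qed.

Lemma Fp_nat_eq0 k : ((k%:R : 'F_p) == 0) = (p %| k)%N.
Proof. by rewrite -(Fp_nat_mod hp) -val_eqE /= val_Fp_nat // modn_mod. Qed.

Lemma padic_residue_eq0 (z : padic_int p) :
  (residue z == 0) = (p %| val (padic_fam z 0))%N.
Proof. exact: Fp_nat_eq0. Qed.

Lemma padic_residue_eq0_dvd (z : padic_int p) :
  residue z = 0 -> exists c, z = p%:R * c.
Proof.
move=> /eqP; rewrite padic_residue_eq0 => p_dvd_z0.
have p_dvd_z n : (p %| val (padic_fam z n))%N by rewrite /dvdn padic_fam_modp.
pose cf : ZpProd p := fun n => (val (padic_fam z n.+1) %/ p)%:R.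
have cf_compat : cf \in @padic_compat p.
  rewrite inE; apply/asboolP => n; apply: val_inj.
  rewrite /padic_red /= !val_Zp_nat ?padic_mod_gt1 //.
  rewrite (modn_dvdm _ (padic_mod_dvd p n)).
  move: (val_padic_famS z n.+1) (p_dvd_z n.+1) (p_dvd_z n.+2).
  move: (val (padic_fam z n.+1)) (val (padic_fam z n.+2)) => X Y.
  move=> eXY /dvdnP[x eX] /dvdnP[y eY]; move: eXY; rewrite eX eY padic_modS.
  rewrite !mulnK ?prime_gt0 // -!(mulnC p) -muln_modr => /eqP.
  by rewrite eqn_pmul2l ?prime_gt0 // => /eqP ->; rewrite modn_mod.
exists (PadicInt cf_compat); apply: val_inj.
apply: functional_extensionality_dep => n.
change (padic_fam z n = padic_fam (p%:R : padic_int p) n * cf n).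
rewrite padic_fam_nat /cf -natrM mulnC divnK ?p_dvd_z //.
by have /asboolP -> := padic_famP z; rewrite /padic_red.
Qed.

Lemma padic_residue_unit (z : padic_int p) :
  residue z != 0 -> exists u, z * u = 1.
Proof.
rewrite padic_residue_eq0 => p_ndvd_z0.
have zn_unit n : padic_fam z n \is a GRing.unit.
  rewrite (padic_val (padic_fam z n)) unitZpE ?padic_mod_gt1 //.
  move: (padic_fam_modp z n); move: (val (padic_fam z n)) => k k_modp.
  by rewrite (padic_modE hp) coprime_pexpl // prime_coprime // /dvdn k_modp.
pose uf : ZpProd p := fun n => (padic_fam z n)^-1.
have uf_compat : uf \in @padic_compat p.
  rewrite inE; apply/asboolP => n; rewrite /uf.
  have red1 : padic_red (1 : 'Z_(padic_mod p n.+1)) = 1.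
    have := val_Zp_nat (padic_mod_gt1 p n.+1) 1.
    by rewrite modn_small ?padic_mod_gt1 // /padic_red => ->.
  have /asboolP zS := padic_famP z.
  have : padic_fam z n * padic_red (padic_fam z n.+1)^-1 = 1.
    by rewrite {1}zS -padic_redM mulrV ?zn_unit // red1.
  by move=> /(canRL (mulKr (zn_unit n))); rewrite mulr1.
exists (PadicInt uf_compat); apply: val_inj.
apply: functional_extensionality_dep => n.
change (padic_fam z n * uf n = 1).
by rewrite /uf mulrV ?zn_unit.
Qed.

Lemma padic_nat_dvd k n (c : padic_int p) :
  n%:R = (p ^ k)%:R * c -> (p ^ k %| n)%N.
Proof.
move=> /(congr1 (fun x => padic_fam x k)).
rewrite -[padic_fam (_ * c) k]/(padic_fam ((p ^ k)%:R : padic_int p) k * padic_fam c k).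
rewrite !padic_fam_nat (padic_val (padic_fam c k)) -natrM.
move=> /(congr1 val); rewrite /= !val_Zp_nat ?padic_mod_gt1 // => e.
have pk_dvd : (p ^ k %| padic_mod p k)%N by rewrite (padic_modE hp) dvdn_exp2l.
by rewrite /dvdn -(modn_dvdm _ pk_dvd) e (modn_dvdm _ pk_dvd) modnMr.
Qed.

End PadicDivision.

Section FermatQuotient.
Variables (p : nat) (hp : prime p).
Local Notation residue := (padic_residue hp).
Local Notation delta := (@fermat_quot p).

Lemma Fp_expp (x : 'F_p) : x ^+ p = x.
Proof. by rewrite -[X in x ^+ X](card_Fp hp) expf_card. Qed.

Lemma fermat_quotP (x : padic_int p) : p%:R * delta x = x - x ^+ p.
Proof.
rewrite /fermat_quot; case: pselect => [ex|[]]; first by case: (cid ex).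
have [c ->] : exists c, x - x ^+ p = p%:R * c.
  by apply: padic_residue_eq0_dvd; rewrite rmorphB rmorphXn Fp_expp subrr.
by exists c.
Qed.

Definition padic_cong k (x y : padic_int p) := exists c, x - y = (p ^ k)%:R * c.

Lemma padic_cong_sym k x y : padic_cong k x y -> padic_cong k y x.
Proof. by case=> c e; exists (- c); rewrite mulrN -e opprB. Qed.

Lemma padic_cong_trans k x y z :
  padic_cong k x y -> padic_cong k y z -> padic_cong k x z.
Proof. by case=> c e [d f]; exists (c + d); rewrite mulrDr -e -f addrA subrK. Qed.

Lemma padic_cong_le i k x y : (i <= k)%N -> padic_cong k x y -> padic_cong i x y.
Proof.
move=> le_ik [c e]; exists ((p ^ (k - i))%:R * c).
by rewrite e mulrA -natrM -expnD subnKC.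
Qed.

Lemma padic_cong_residue k x y : padic_cong k.+1 x y -> residue x = residue y.
Proof.
case=> c e; apply/eqP; rewrite -subr_eq0 -rmorphB e rmorphM rmorph_nat.
by have /eqP-> : (p ^ k.+1)%:R == 0 :> 'F_p by rewrite (Fp_nat_eq0 hp) dvdn_exp.
Qed.

Lemma padic_residue_cong x y : residue x = residue y -> padic_cong 1 x y.
Proof.
move=> eq_xy; have [c e] : exists c, x - y = p%:R * c.
  by apply: padic_residue_eq0_dvd; rewrite rmorphB /= eq_xy subrr.
by exists c; rewrite expn1.
Qed.

(* x^p - y^p = (x - y) * S, where S is a sum of p terms all congruent to     *)
(* y^(p-1) modulo p, so S is itself divisible by p.                          *)
Lemma padic_cong_exp i x y :
  padic_cong i.+1 x y -> padic_cong i.+2 (x ^+ p) (y ^+ p).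
Proof.
move=> cong_xy; have res_xy := padic_cong_residue cong_xy; case: cong_xy => c e.
rewrite /padic_cong subrXX e; set S := \sum_(_ < _) _.
have [s ->] : exists s, S = p%:R * s.
  apply: padic_residue_eq0_dvd; rewrite /S rmorph_sum /=.
  rewrite (eq_bigr (fun _ => residue y ^+ p.-1)) => [|j _]; last first.
    rewrite rmorphM !rmorphXn /= res_xy -exprD subnK //.
    by rewrite -ltnS prednK ?prime_gt0.
  by rewrite sumr_const card_ord -mulr_natr (pcharf0 (pchar_Fp hp)) mulr0.
by exists (c * s); rewrite (expnS p i.+1) natrM; ring.
Qed.

(* Induction on i <= k: a - b = (a^p - b^p) + p * (delta a - delta b), and  *)
(* delta a = delta b mod p^k by the outer induction.                         *)
Lemma padic_cong_fermat_quot k a b :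
  (forall j, (j < k)%N -> residue (iter j delta a) = residue (iter j delta b)) ->
  padic_cong k a b.
Proof.
elim: k a b => [|k IHk] a b res_ab.
  by exists (a - b); rewrite expn0 mul1r.
have cong_delta : padic_cong k (delta a) (delta b).
  by apply: IHk => j lt_jk; rewrite -!iterSr; apply: res_ab.
suff cong_le i : (i <= k)%N -> padic_cong i.+1 a b by apply: cong_le.
elim: i => [_|i IHi lt_ik]; first exact/padic_residue_cong/(res_ab 0%N).
have [c ec] := padic_cong_exp (IHi (ltnW lt_ik)).
have [d ed] := padic_cong_le lt_ik cong_delta.
exists (c + d); rewrite mulrDr -ec (expnS p i.+1) natrM -mulrA -ed mulrBr.
by rewrite !fermat_quotP; ring.
Qed.

Lemma padic_cong_nat_eq k x y :
  (x < p ^ k)%N -> (y < p ^ k)%N -> padic_cong k x%:R y%:R -> x = y.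
Proof.
wlog le_yx : x y / (y <= x)%N => [hwlog|].
  move=> lt_x lt_y cong_xy; have [le_yx|/ltnW le_xy] := leqP y x.
    exact: hwlog.
  by apply/esym/hwlog => //; apply: padic_cong_sym.
move=> lt_x _ [c]; rewrite -natrB // => /(padic_nat_dvd hp) dvd_xy.
apply/eqP; rewrite eqn_leq le_yx andbT -subn_eq0.
move: dvd_xy; apply: contraTT; rewrite -lt0n => xy_gt0.
by rewrite gtnNdvd // (leq_ltn_trans (leq_subr y x)).
Qed.

End FermatQuotient.

(* residues of a, delta a, ..., delta^(m-1) a separate the indices alpha.    *)
Theorem lemma4p2 (p m : nat) (hp : prime p)
  (a : 'I_(p ^ m) -> padic_int p)
  (haC : forall alpha : 'I_(p ^ m), iter m (@fermat_quot p) (a alpha) = 0)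
  (haR : forall alpha : 'I_(p ^ m),
      exists c : padic_int p, a alpha - (alpha : nat)%:R = (p ^ m)%:R * c)
  (ord : 'I_(p ^ m) -> {ffun 'I_m -> 'I_p}) (hord : bijective ord) :
  exists u : padic_int p,
    \det (\matrix_(alpha < p ^ m, beta < p ^ m)
            \prod_(j < m) (iter j (@fermat_quot p) (a alpha)) ^+ (ord beta j))
      * u = 1.
Proof.
set W := \matrix_(_, _) _.
pose v alpha (j : 'I_m) := padic_residue hp (iter j (@fermat_quot p) (a alpha)).
have v_inj alpha gamma : v alpha =1 v gamma -> alpha = gamma.
  move=> v_eq; apply/ord_inj/(padic_cong_nat_eq hp (ltn_ord _) (ltn_ord _)).
  apply: padic_cong_trans (padic_cong_sym (haR alpha)) _.
  apply: padic_cong_trans (haR gamma).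
  by apply: padic_cong_fermat_quot => j lt_jm; apply: (v_eq (Ordinal lt_jm)).
have Fp_unit := monomial_mx_unit (card_Fp hp) v_inj hord.
apply: (@padic_residue_unit p hp (\det W)).
by rewrite -det_map_mx map_monomial_mx -unitfE -unitmxE.
Qed.
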